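(* Let $L\in\mathbb N$, ${\bf A}\in\mathbb R^{M\times N}$, ${\bf b}\in\mathbb R^M$, $\tilde\eta>0$, and let $(r,{\bf u})$ follow the weight-normalized gradient flow with learning rates $(\eta_r,\eta_{\bf u})=(\tilde\eta,1)$, $\|{\bf u}_0\|_2=1$, and ${\bf u}(t)>0$ entrywise for all $t\ge0$ (this holds e.g. if $L\ge2$, $r_0>0$, ${\bf u}_0>0$). Then the quantity $$h_{\tilde\eta}(t):=(I-{\bf A}^\dagger{\bf A})\cdot\begin{cases}\log\Big({\bf u}(t)\exp\big(\tfrac{1}{2\tilde\eta}r(t)^2\big)\Big) & L=2,\\ {\bf u}(t)^{\odot(2-L)}\exp\big(\tfrac{2-L}{2\tilde\eta}r(t)^2\big) & L\neq2\end{cases}$$ is constant in $t\ge0$.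
   Context: $\odot$ denotes entrywise product/power, $\log$ acts entrywise; ${\bf A}^\dagger$ is the Moore–Penrose pseudoinverse. Loss: $\mathcal L({\bf x})=\frac{1}{2L}\|{\bf A}{\bf x}^{\odot L}-{\bf b}\|_2^2$. Weight-normalized loss $\tilde{\mathcal L}(r,{\bf u})=\mathcal L\big(\frac{r}{\|{\bf u}\|_2}{\bf u}\big)$ for $r\in\mathbb R$, ${\bf u}\in\mathbb R^N\setminus\{0\}$. Weight-normalized gradient flow: $\partial_t r=-\eta_r\nabla_r\tilde{\mathcal L}(r,{\bf u})$, $\partial_t{\bf u}=-\eta_{\bf u}\nabla_{\bf u}\tilde{\mathcal L}(r,{\bf u})$, $r(0)=r_0$, ${\bf u}(0)={\bf u}_0$. *)

From HB Require Import structures.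
From mathcomp Require Import all_boot all_order all_algebra.
From mathcomp Require Import all_classical all_reals all_analysis.
Set Implicit Arguments. Unset Strict Implicit. Unset Printing Implicit Defensive.
Import Order.TTheory GRing.Theory Num.Theory numFieldNormedType.Exports.
Local Open Scope classical_set_scope.
Local Open Scope ring_scope.

Section WN.
Variable R : realType.

Definition epow m n (x : 'M[R]_(m, n)) (k : nat) : 'M[R]_(m, n) :=
  map_mx (fun a => a ^+ k) x.

Definition norm2 n (x : 'cV[R]_n) : R := Num.sqrt (\sum_i x i 0 ^+ 2).

Definition loss M N (L : nat) (A : 'M[R]_(M, N)) (b : 'cV[R]_M) (x : 'cV[R]_N) : R :=
  (2 * L%:R)^-1 * norm2 (A *m epow x L - b) ^+ 2.

Definition wn_loss M N (L : nat) (A : 'M[R]_(M, N)) (b : 'cV[R]_M) (r : R) (u : 'cV[R]_N) : R :=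
  loss L A b ((r / norm2 u) *: u).

Definition grad_r M N (L : nat) (A : 'M[R]_(M, N)) (b : 'cV[R]_M) (r : R) (u : 'cV[R]_N) : R :=
  derive1 (fun s => wn_loss L A b s u) r.

Definition grad_u M N (L : nat) (A : 'M[R]_(M, N)) (b : 'cV[R]_M) (r : R) (u : 'cV[R]_N)
  : 'cV[R]_N :=
  \col_i derive1 (fun s => wn_loss L A b r (u + s *: delta_mx i 0)) 0.

Definition is_pinv M N (A : 'M[R]_(M, N)) (X : 'M[R]_(N, M)) : Prop :=
  [/\ A *m X *m A = A, X *m A *m X = X, (A *m X)^T = A *m X & (X *m A)^T = X *m A].

(* the Moore-Penrose pseudoinverse A^† (the unique X satisfying the Penrose conditions) *)
Definition pinv M N (A : 'M[R]_(M, N)) : 'M[R]_(N, M) := xget 0 [set X | is_pinv A X].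

Definition wn_gradient_flow M N (L : nat) (A : 'M[R]_(M, N)) (b : 'cV[R]_M)
  (eta_r eta_u : R) (r0 : R) (u0 : 'cV[R]_N) (r : R -> R) (u : R -> 'cV[R]_N) : Prop :=
  r 0 = r0 /\ u 0 = u0 /\ {within [set t : R | 0 <= t], continuous r} /\
      (forall i, {within [set t : R | 0 <= t], continuous (fun t => u t i 0)}) /\
      (forall t, 0 < t -> derivable r t 1 /\
                          derive1 r t = - (eta_r * grad_r L A b (r t) (u t))) /\
      (forall t, 0 < t -> forall i,
          derivable (fun s => u s i 0) t 1 /\
          derive1 (fun s => u s i 0) t = - (eta_u * grad_u L A b (r t) (u t) i 0)).

Definition h_quant M N (L : nat) (A : 'M[R]_(M, N)) (eta : R) (r : R) (u : 'cV[R]_N)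
  : 'cV[R]_N :=
  (1%:M - pinv A *m A) *m
    (if L == 2%N then map_mx (fun a => ln (a * expR (r ^+ 2 / (2 * eta)))) u
     else map_mx (fun a => a ^ (2%:Z - L%:Z) *
                           expR ((2%:Z - L%:Z)%:~R * r ^+ 2 / (2 * eta))) u).

End WN.

From Pilot Require Import Defs.
From HB Require Import structures.
From mathcomp Require Import all_boot all_order all_algebra.
From mathcomp Require Import all_classical all_reals all_analysis.
From mathcomp Require Import ring.
Import Order.TTheory GRing.Theory Num.Theory numFieldNormedType.Exports.
Local Open Scope classical_set_scope.
Local Open Scope ring_scope.
Set Implicit Arguments. Unset Strict Implicit. Unset Printing Implicit Defensive.

(* Write w = (r/|u|) u for the weight, Q(w) = A^T (A w^L - b) for the
   back-projected residual and g = grad L(w) = w^{L-1} (.) Q(w).  The partial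
   derivatives of the weight-normalized loss are dL~/dr = <g, u/|u|> and
   dL~/du = (r/|u|) (g - <g,u> u/|u|^2).  The latter is orthogonal to u, so
   along the flow |u(t)| = |u0| = 1 and the flow reduces to
   r' = -eta <g,u>,  u' = -r (g - <g,u> u).  Coordinatewise this gives
   u_i'/u_i + r r'/eta = -r g_i/u_i = -r^L u_i^{L-2} Q_i, so every entry of the
   vector inside h_eta(t) has derivative c(t) Q_i(t) for one scalar c(t)
   (c = -r^2 if L = 2, c = -(2-L) e^{(2-L) r^2/(2 eta)} r^L otherwise).  As Q
   lies in the range of A^T, which I - A^+ A annihilates, h_eta has zero
   derivative on (0,+oo); being continuous on [0,+oo) it is constant there. *)

Section PointwiseCalculus.
Variable R : realType.
Implicit Types (f g : R -> R) (x df dg : R) (D : set R).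

(* Differentiation rules for real functions of a real variable, stated for
   pointwise-written functions (fun s => f s + g s, ...) so that they compose
   by plain application; the library states them for function operations. *)

Lemma is_der_cst x (c : R) : is_derive x 1 (fun _ : R => c) 0.
Proof. exact: is_derive_cst. Qed.

Lemma is_der_id x : is_derive x 1 (fun s : R => s) 1.
Proof. exact: is_derive_id. Qed.

Lemma is_der_add f g x df dg : is_derive x 1 f df -> is_derive x 1 g dg ->
  is_derive x 1 (fun s => f s + g s) (df + dg).
Proof. by move=> hf hg; have := is_deriveD hf hg. Qed.

Lemma is_der_opp f x df : is_derive x 1 f df -> is_derive x 1 (fun s => - f s) (- df).
Proof. by move=> hf; have := is_deriveN hf. Qed.

Lemma is_der_mul f g x df dg : is_derive x 1 f df -> is_derive x 1 g dg ->
  is_derive x 1 (fun s => f s * g s) (f x * dg + g x * df).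
Proof. by move=> hf hg; have := is_deriveM hf hg. Qed.

Lemma is_der_pow f x df n : is_derive x 1 f df ->
  is_derive x 1 (fun s => f s ^+ n) (n%:R * f x ^+ n.-1 * df).
Proof. by move=> hf; have := is_deriveX n hf; rewrite exprfctE. Qed.

Lemma is_der_inv f x df : f x != 0 -> is_derive x 1 f df ->
  is_derive x 1 (fun s => (f s)^-1) (- (f x) ^- 2 * df).
Proof.
move=> fx0 hf; apply: DeriveDef; first exact: derivableV.
by rewrite deriveV // derive_val.
Qed.

Lemma is_der_sum n (h : 'I_n -> R -> R) x (dh : 'I_n -> R) :
  (forall i, is_derive x 1 (h i) (dh i)) ->
  is_derive x 1 (fun s => \sum_(i < n) h i s) (\sum_(i < n) dh i).
Proof. by move=> hh; have := is_derive_sum hh; rewrite fct_sumE. Qed.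

Lemma is_der_comp f g x df dg : is_derive x 1 f df -> is_derive (f x) 1 g dg ->
  is_derive x 1 (fun s => g (f s)) (dg * df).
Proof.
move=> hf hg.
have df1 : derivable f x 1 by case: hf.
have dg1 : derivable g (f x) 1 by case: hg.
apply: DeriveDef.
  apply/derivable1_diffP; apply: (@differentiable_comp _ _ _ _ f g);
  exact/derivable1_diffP.
have := derive1_comp df1 dg1; rewrite !derive1E /comp => ->.
by rewrite !derive_val.
Qed.

Lemma is_der_ext f g x df : (forall s, f s = g s) -> is_derive x 1 f df -> is_derive x 1 g df.
Proof. by move=> e; have -> : f = g by apply/funext. Qed.

Lemma is_der_val f x df df' : df = df' -> is_derive x 1 f df -> is_derive x 1 f df'.
Proof. by move=> ->. Qed.

Lemma is_der_derive1 f x : derivable f x 1 -> is_derive x 1 f (derive1 f x).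
Proof. by move=> d; rewrite derive1E; exact: derivableP. Qed.

Lemma is_der_exprz f x df (z : int) : f x != 0 -> is_derive x 1 f df ->
  is_derive x 1 (fun s => f s ^ z) (z%:~R * f x ^ (z - 1) * df).
Proof.
case: z => n fx0 hf.
  apply: (@is_der_ext (fun s => f s ^+ n)) => //.
  apply: is_der_val (is_der_pow n hf); case: n => [|m]; first by rewrite !mul0r.
  have -> : (Posz m.+1 - 1 = Posz m)%R by rewrite -addn1 PoszD addrK.
  by rewrite pmulrn.
have fxn0 : f x ^+ n.+1 != 0 by rewrite expf_neq0.
apply: (@is_der_ext (fun s => (f s ^+ n.+1)^-1)) => //.
have hinv := @is_der_inv (fun s => f s ^+ n.+1) x _ fxn0 (is_der_pow n.+1 hf).
apply: is_der_val hinv.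
have -> : (Negz n - 1 = Negz n.+1)%R by rewrite !NegzE -opprD -PoszD addn1.
rewrite NegzE mulrNz pmulrn /exprz /= !exprSr.
by field; rewrite ?fx0 ?expf_neq0.
Qed.

Lemma is_der_continuous g (y : R) dg : is_derive y 1 g dg -> {for y, continuous g}.
Proof. by move=> [d _]; apply: differentiable_continuous; exact/derivable1_diffP. Qed.

Lemma cont_cst D (c : R) : {within D, continuous (fun _ : R => c)}.
Proof. by apply: continuous_subspaceT => x; exact: cvg_cst. Qed.

Lemma cont_add D f g : {within D, continuous f} -> {within D, continuous g} ->
  {within D, continuous (fun s => f s + g s)}.
Proof. by move=> cf cg; have := within_continuousD cf cg. Qed.

Lemma cont_mul D f g : {within D, continuous f} -> {within D, continuous g} ->
  {within D, continuous (fun s => f s * g s)}.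
Proof. by move=> cf cg x; apply: cvgM; [exact: cf | exact: cg]. Qed.

Lemma cont_pow D f n : {within D, continuous f} ->
  {within D, continuous (fun s => f s ^+ n)}.
Proof.
move=> cf; elim: n => [|n IH]; first by under eq_fun do rewrite expr0; exact: cont_cst.
by under eq_fun do rewrite exprS; exact: cont_mul.
Qed.

Lemma cont_sum D n (f : 'I_n -> R -> R) : (forall i, {within D, continuous (f i)}) ->
  {within D, continuous (fun s => \sum_(i < n) f i s)}.
Proof.
elim: n f => [|n IH] f cf.
  by under eq_fun do rewrite big_ord0; exact: cont_cst.
under eq_fun do rewrite big_ord_recr /=.
apply: cont_add; last exact: cf.
exact: (IH (fun i => f (widen_ord (leqnSn n) i))).
Qed.

Lemma cont_comp D f g : {within D, continuous f} ->
  (forall t, D t -> {for f t, continuous g}) ->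
  {within D, continuous (fun s => g (f s))}.
Proof.
move=> cf cg; apply: (@within_continuous_comp _ _ _ D f g) => //.
by move=> y /set_mem [t Dt <-]; exact: cg.
Qed.

Lemma constant_of_derive0 f (a : R) :
  {within [set t | a <= t], continuous f} ->
  (forall t, a < t -> is_derive t 1 f 0) -> forall t, a <= t -> f t = f a.
Proof.
move=> cf df t; rewrite le_eqVlt => /orP[/eqP<-//|a_lt_t].
have d0 : forall x, x \in `]a, t[ -> is_derive x 1 f ((fun _ => 0 : R) x).
  by move=> x; rewrite in_itv /= => /andP[ax _]; exact: df.
have cat : {within `[a, t], continuous f}.
  apply: continuous_subspaceW cf => s /=; rewrite in_itv /= => /andP[+ _].
  by [].
have [c _] := MVT a_lt_t d0 cat.
by rewrite mul0r => /eqP; rewrite subr_eq0 => /eqP.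
Qed.

End PointwiseCalculus.

Section PseudoInverse.
Variable R : realType.

(* The Gram matrix F F^T of a real matrix with linearly independent rows is
   invertible: v F F^T = 0 forces |v F|^2 = 0, hence v F = 0, hence v = 0. *)
Lemma gram_unitmx k n (F : 'M[R]_(k, n)) : row_free F -> F *m F^T \in unitmx.
Proof.
move=> freeF; rewrite -row_free_unit; apply: inj_row_free => v vFFt0.
have vF_sq0 : (v *m F) *m (v *m F)^T = 0.
  by rewrite trmx_mul mulmxA -(mulmxA v) vFFt0 mul0mx.
have vF0 : v *m F = 0.
  apply/matrixP => i j; rewrite [RHS]mxE.
  have := congr1 (fun S : 'M[R]_1 => S i i) vF_sq0; rewrite [RHS]mxE mxE => sum0.
  have sq_ge0 : forall l : 'I_n, xpredT l -> 0 <= (v *m F) i l * (v *m F)^T l i.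
    by move=> l _; rewrite [(v *m F)^T _ _]mxE -expr2 sqr_ge0.
  have := @psumr_eq0P _ 'I_n xpredT _ sq_ge0 sum0 j isT.
  by rewrite [(v *m F)^T _ _]mxE -expr2 => /eqP; rewrite sqrf_eq0 => /eqP.
by move/eqP: vF0; rewrite mulmx_free_eq0 // => /eqP.
Qed.

Lemma is_pinv_rank_factor M N k (C : 'M[R]_(M, k)) (F : 'M[R]_(k, N)) :
  F *m F^T \in unitmx -> C^T *m C \in unitmx ->
  is_pinv (C *m F) (F^T *m invmx (F *m F^T) *m invmx (C^T *m C) *m C^T).
Proof.
move=> uF uC.
set GF := invmx (F *m F^T); set GC := invmx (C^T *m C).
have symGF : GF^T = GF by rewrite /GF trmx_inv trmx_mul trmxK.
have symGC : GC^T = GC by rewrite /GC trmx_inv trmx_mul trmxK.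
set X := F^T *m GF *m GC *m C^T.
have FX : F *m X = GC *m C^T by rewrite /X !mulmxA mulmxV // mul1mx.
have XC : X *m C = F^T *m GF by rewrite /X -mulmxA -mulmxA mulVmx // mulmx1.
split.
- by rewrite -(mulmxA C F X) FX !mulmxA -(mulmxA _ C^T C) -(mulmxA C GC) /GC
     mulVmx // mulmx1.
- by rewrite mulmxA XC -mulmxA FX /X !mulmxA.
- by rewrite -mulmxA FX mulmxA !trmx_mul trmxK symGC mulmxA.
- by rewrite mulmxA XC !trmx_mul trmxK symGF mulmxA.
Qed.

Lemma pinvP M N (A : 'M[R]_(M, N)) : is_pinv A (Defs.pinv A).
Proof.
have uF : row_base A *m (row_base A)^T \in unitmx.
  by apply: gram_unitmx; exact: row_base_free.
have uC : (col_base A)^T *m col_base A \in unitmx.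
  rewrite -{2}(trmxK (col_base A)); apply: gram_unitmx.
  by rewrite /row_free mxrank_tr; have := col_base_full A; rewrite /row_full => /eqP ->.
have := is_pinv_rank_factor uF uC; rewrite mulmx_base => hX.
exact: (@xgetI _ 0 (fun X => is_pinv A X) _ hX).
Qed.

(* I - A^+ A projects onto the kernel of A, hence annihilates the range of A^T. *)
Lemma pinv_proj_trmx M N (A : 'M[R]_(M, N)) : (1%:M - Defs.pinv A *m A) *m A^T = 0.
Proof.
have [APA _ _ symPA] := pinvP A.
by rewrite mulmxBl mul1mx -symPA -trmx_mul mulmxA APA subrr.
Qed.

End PseudoInverse.

Section Gradients.
Variables (R : realType) (M N L : nat) (A : 'M[R]_(M, N)) (b : 'cV[R]_M).
(* L > 0 lets the 1/(2L) normalization cancel the factor L from x^L. *)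
Hypothesis L_gt0 : (0 < L)%N.

Definition backproj (x : 'cV[R]_N) : 'cV[R]_N := A^T *m (A *m epow x L - b).

Lemma pinv_proj_backproj (x : 'cV[R]_N) : (1%:M - Defs.pinv A *m A) *m backproj x = 0.
Proof. by rewrite /backproj mulmxA pinv_proj_trmx mul0mx. Qed.

Definition loss_grad (x : 'cV[R]_N) : 'cV[R]_N := \col_j (x j 0 ^+ L.-1 * backproj x j 0).

Lemma norm2_sqr n (v : 'cV[R]_n) : norm2 v ^+ 2 = \sum_i v i 0 ^+ 2.
Proof. by rewrite /norm2 sqr_sqrtr // sumr_ge0 // => i _; exact: sqr_ge0. Qed.

Lemma norm2_gt0 n (v : 'cV[R]_n) : (0 < n)%N -> (forall i, 0 < v i 0) -> 0 < norm2 v.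
Proof.
move=> n_gt0 v_gt0; rewrite /norm2 sqrtr_gt0 (bigD1 (Ordinal n_gt0)) //=.
by rewrite ltr_pwDl ?exprn_gt0 // sumr_ge0 // => i _; exact: sqr_ge0.
Qed.

Lemma lossE (x : 'cV[R]_N) :
  loss L A b x = (2 * L%:R)^-1 * \sum_k (\sum_j A k j * x j 0 ^+ L - b k 0) ^+ 2.
Proof.
rewrite /loss norm2_sqr; congr (_ * _); apply: eq_bigr => k _; rewrite !mxE.
by under eq_bigr do rewrite mxE.
Qed.

Lemma loss_chain_rule (w : R -> 'cV[R]_N) (s0 : R) (dw : 'I_N -> R) :
  (forall j, is_derive s0 1 (fun s => w s j 0) (dw j)) ->
  is_derive s0 1 (fun s => loss L A b (w s)) (\sum_j loss_grad (w s0) j 0 * dw j).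
Proof.
move=> dw_ok.
apply: (@is_der_ext _ (fun s => (2 * L%:R)^-1 *
   \sum_k (\sum_j A k j * w s j 0 ^+ L - b k 0) ^+ 2)); first by move=> s; rewrite lossE.
set res := fun k : 'I_M => \sum_j A k j * w s0 j 0 ^+ L - b k 0.
have dres : forall k, is_derive s0 1 (fun s => \sum_j A k j * w s j 0 ^+ L - b k 0)
    (\sum_j A k j * (L%:R * w s0 j 0 ^+ L.-1 * dw j)).
  move=> k; apply: is_der_val (is_der_add (is_der_sum (fun j =>
      is_der_mul (is_der_cst _ (A k j)) (is_der_pow L (dw_ok j)))) (is_der_opp (is_der_cst _ (b k 0)))).
  by rewrite oppr0 addr0; apply: eq_bigr => j _; rewrite mulr0 addr0.
apply: is_der_val (is_der_mul (is_der_cst _ _) (is_der_sum (fun k => is_der_pow 2 (dres k)))).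
rewrite mulr0 addr0 big_distrr /=.
under eq_bigr do rewrite expr1 big_distrr /=.
under eq_bigr do rewrite big_distrr /=.
rewrite exchange_big /=; apply: eq_bigr => j _.
rewrite /loss_grad /backproj !mxE [in RHS]big_distrr [in RHS]big_distrl /=.
apply: eq_bigr => k _; rewrite [A^T _ _]mxE.
have -> : (A *m epow (w s0) L - b) k 0 = res k.
  by rewrite /res !mxE; under eq_bigr do rewrite mxE.
have L_neq0 : (L%:R : R) != 0 by rewrite pnatr_eq0 -lt0n.
by rewrite /res; field.
Qed.

Lemma sum_mul_delta n (i : 'I_n) (f : 'I_n -> R) :
  \sum_k f k * delta_mx i (0 : 'I_1) k 0 = f i.
Proof.
rewrite (bigD1 i) //= mxE !eqxx mulr1 big1 ?addr0 // => k /negPf ki.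
by rewrite mxE ki mulr0.
Qed.

Lemma grad_rE r (u : 'cV[R]_N) :
  grad_r L A b r u = \sum_j loss_grad ((r / norm2 u) *: u) j 0 * (u j 0 / norm2 u).
Proof.
rewrite /grad_r derive1E; set n := norm2 u.
have dw : forall j, is_derive r 1 (fun s => ((s / n) *: u) j 0) (u j 0 / n).
  move=> j; apply: (@is_der_ext _ (fun s => s * n^-1 * u j 0)); first by move=> s; rewrite mxE.
  apply: is_der_val (is_der_mul (is_der_mul (is_der_id _) (is_der_cst _ _)) (is_der_cst _ _)).
  by rewrite !mulr0 !add0r mulr1 mulrC.
have dL := loss_chain_rule dw.
by rewrite /wn_loss -/n derive_val.
Qed.

Lemma norm2_deriv_coord (u : 'cV[R]_N) i : 0 < norm2 u ->
  is_derive (0 : R) 1 (fun s => norm2 (u + s *: delta_mx i 0)) (u i 0 / norm2 u).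
Proof.
move=> n_gt0; set n := norm2 u.
pose d k := (delta_mx i (0 : 'I_1) : 'cV[R]_N) k 0.
pose S s := \sum_k (u k 0 + s * d k) ^+ 2.
have S0 : S 0 = n ^+ 2.
  by rewrite /S norm2_sqr; apply: eq_bigr => k _; rewrite mul0r addr0.
have S0_gt0 : 0 < S 0 by rewrite S0 exprn_gt0.
have sqrtS0 : Num.sqrt (S 0) = n by rewrite S0 sqrtr_sqr gtr0_norm.
have dS : is_derive (0 : R) 1 S (2 * u i 0).
  apply: is_der_val (is_der_sum (fun k => is_der_pow 2 (is_der_add (is_der_cst _ (u k 0))
     (is_der_mul (is_der_id _) (is_der_cst _ (d k)))))).
  rewrite -(sum_mul_delta i (fun k => 2 * u k 0)); apply: eq_bigr => k _.
  by rewrite !mulr0 !add0r mul0r addr0 mulr1 expr1.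
apply: (@is_der_ext _ (fun s => Num.sqrt (S s))).
  by move=> s; rewrite /norm2 /S; congr (Num.sqrt _); apply: eq_bigr => k _; rewrite /d !mxE.
apply: is_der_val (is_der_comp dS (is_derive1_sqrt S0_gt0)).
have n_neq0 : n != 0 by rewrite gt_eqF.
by rewrite sqrtS0; field.
Qed.

Lemma grad_uE r (u : 'cV[R]_N) i : 0 < norm2 u ->
  grad_u L A b r u i 0 =
  r / norm2 u * (loss_grad ((r / norm2 u) *: u) i 0 -
    u i 0 * (\sum_j loss_grad ((r / norm2 u) *: u) j 0 * u j 0) / norm2 u ^+ 2).
Proof.
move=> n_gt0; rewrite /grad_u mxE derive1E; set n := norm2 u.
set g := fun j => loss_grad ((r / n) *: u) j 0.
pose d k := (delta_mx i (0 : 'I_1) : 'cV[R]_N) k 0.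
have n_neq0 : n != 0 by rewrite gt_eqF.
have dw : forall j, is_derive (0 : R) 1
    (fun s => ((r / norm2 (u + s *: delta_mx i 0)) *: (u + s *: delta_mx i 0)) j 0)
    (- (r * u i 0 / n ^+ 3) * u j 0 + r / n * d j).
  move=> j; apply: (@is_der_ext _ (fun s =>
      r * (norm2 (u + s *: delta_mx i 0))^-1 * (u j 0 + s * d j))).
    by move=> s; rewrite /d !mxE.
  have n0_neq0 : norm2 (u + 0 *: delta_mx i 0) != 0 by rewrite scale0r addr0.
  have dinv := @is_der_inv _ (fun s => norm2 (u + s *: delta_mx i 0)) 0 _ n0_neq0
    (norm2_deriv_coord i n_gt0).
  apply: is_der_val (is_der_mul (is_der_mul (is_der_cst _ r) dinv)
      (is_der_add (is_der_cst _ (u j 0)) (is_der_mul (is_der_id _) (is_der_cst _ (d j))))).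
  by rewrite /= scale0r addr0 -/n !mulr0 !add0r mul0r addr0 mulr1; field.
have dL := loss_chain_rule dw.
rewrite /wn_loss derive_val scale0r addr0 -/n.
under eq_bigr do rewrite mulrDr.
rewrite big_split /=.
have -> : \sum_j loss_grad ((r / n) *: u) j 0 * (r / n * d j) = r / n * g i.
  rewrite -(sum_mul_delta i (fun j => r / n * g j)); apply: eq_bigr => j _.
  by rewrite /d /g mulrCA mulrA.
rewrite (eq_bigr (fun j => - (r * u i 0 / n ^+ 3) * (g j * u j 0))); last first.
  by move=> j _; rewrite /g mulrCA mulrA.
by rewrite -big_distrr /= /g; field.
Qed.

(* The u-gradient is orthogonal to u; this is what keeps |u| constant. *)
Lemma grad_u_orthogonal r (u : 'cV[R]_N) : 0 < norm2 u ->
  \sum_i u i 0 * grad_u L A b r u i 0 = 0.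
Proof.
move=> n_gt0; set n := norm2 u.
under eq_bigr do rewrite (grad_uE _ _ n_gt0).
set g := fun j => loss_grad ((r / n) *: u) j 0.
set c := \sum_j g j * u j 0.
rewrite (eq_bigr (fun i => r / n * (u i 0 * g i) - r / n * c / n ^+ 2 * u i 0 ^+ 2));
  last by move=> i _; rewrite /g; ring.
rewrite sumrB -!big_distrr /= -norm2_sqr.
have -> : \sum_i u i 0 * g i = c by apply: eq_bigr => i _; rewrite mulrC.
have n_neq0 : n != 0 by rewrite gt_eqF.
by rewrite -/n; field.
Qed.

End Gradients.

Lemma exprz_1subn (R : unitRingType) (x : R) n : (0 < n)%N -> x ^ (1 - n%:Z) = x ^- n.-1.
Proof.
move=> n_gt0; have -> : 1 - n%:Z = - (n.-1)%:Z.
  by rewrite -[in n%:Z](prednK n_gt0) -addn1 PoszD; ring.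
by rewrite exprnN.
Qed.

Section Flow.
Variables (R : realType) (M N L : nat) (A : 'M[R]_(M, N)) (b : 'cV[R]_M)
  (eta r0 : R) (u0 : 'cV[R]_N) (r : R -> R) (u : R -> 'cV[R]_N).
Hypotheses (L_gt0 : (0 < L)%N) (eta_gt0 : 0 < eta) (norm_u0 : norm2 u0 = 1)
  (flow : wn_gradient_flow L A b eta 1 r0 u0 r u)
  (u_gt0 : forall t, 0 <= t -> forall i, 0 < u t i 0).
Implicit Types (s t : R).

(* The unit vector u0 forces N > 0, so positive vectors have positive norm. *)
Lemma dim_gt0 : (0 < N)%N.
Proof.
rewrite lt0n; apply/eqP => N0; move/eqP: norm_u0; apply/negP.
rewrite /norm2 big1 ?sqrtr0 1?eq_sym ?oner_eq0 // => i _.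
by exfalso; have := ltn_ord i; move: (nat_of_ord i) => k; rewrite N0.
Qed.

Lemma norm_u_gt0 t : 0 <= t -> 0 < norm2 (u t).
Proof. by move=> t_ge0; apply: norm2_gt0 dim_gt0 _; exact: u_gt0. Qed.

Lemma r_deriv t : 0 < t -> is_derive t 1 r (- (eta * grad_r L A b (r t) (u t))).
Proof.
have [_ [_ [_ [_ [dr _]]]]] := flow.
by move=> t_gt0; have [dr1 <-] := dr t t_gt0; exact: is_der_derive1.
Qed.

Lemma u_deriv t i : 0 < t ->
  is_derive t 1 (fun s => u s i 0) (- grad_u L A b (r t) (u t) i 0).
Proof.
have [_ [_ [_ [_ [_ du]]]]] := flow.
move=> t_gt0; have [du1 eq_du] := du t t_gt0 i.
by rewrite -[grad_u _ _ _ _ _ _ _]mul1r -eq_du; exact: is_der_derive1.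
Qed.

(* |u(t)| = 1: d/dt |u|^2 = -2 <u, grad_u> = 0. *)
Lemma norm_u_const t : 0 <= t -> norm2 (u t) = 1.
Proof.
have [_ [u0E [_ [u_cont _]]]] := flow.
move=> t_ge0; rewrite -norm_u0 -u0E /norm2; congr (Num.sqrt _).
apply: (@constant_of_derive0 _ (fun s => \sum_i u s i 0 ^+ 2)) => //.
  by apply: cont_sum => i; apply: cont_pow; exact: u_cont.
move=> s s_gt0; apply: is_der_val (is_der_sum (fun i => is_der_pow 2 (u_deriv i s_gt0))).
rewrite (eq_bigr (fun i => -2 * (u s i 0 * grad_u L A b (r s) (u s) i 0)));
  last by move=> i _; rewrite expr1; ring.
by rewrite -big_distrr /= (grad_u_orthogonal _ _ L_gt0 _ (norm_u_gt0 (ltW s_gt0))) mulr0.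
Qed.

Let g t : 'cV[R]_N := loss_grad L A b (r t *: u t).
Let Q t : 'cV[R]_N := backproj L A b (r t *: u t).

Lemma r_velocity t : 0 < t ->
  is_derive t 1 r (- (eta * \sum_j g t j 0 * u t j 0)).
Proof.
move=> t_gt0; have := r_deriv t_gt0.
rewrite (grad_rE _ _ L_gt0) norm_u_const ?ltW // divr1.
by under eq_bigr do rewrite divr1.
Qed.

Lemma u_velocity t i : 0 < t -> is_derive t 1 (fun s => u s i 0)
  (- (r t * (g t i 0 - u t i 0 * \sum_j g t j 0 * u t j 0))).
Proof.
move=> t_gt0; have := u_deriv i t_gt0.
by rewrite (grad_uE _ _ L_gt0 _ _ (norm_u_gt0 (ltW t_gt0))) norm_u_const ?ltW // expr1n !divr1.
Qed.

Lemma gE t i : g t i 0 = (r t * u t i 0) ^+ L.-1 * Q t i 0.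
Proof. by rewrite /g /loss_grad !mxE. Qed.

(* For L = 2:  d/dt log(u_i e^{r^2/(2 eta)}) = u_i'/u_i + r r'/eta = -r^2 Q_i. *)
Lemma h_entry_deriv_L2 t i : L = 2%N -> 0 < t ->
  is_derive t 1 (fun s => ln (u s i 0 * expR (r s ^+ 2 / (2 * eta)))) (- r t ^+ 2 * Q t i 0).
Proof.
move=> L2 t_gt0.
have dE := is_der_comp (is_der_mul (is_der_pow 2 (r_velocity t_gt0))
  (is_der_cst t (2 * eta)^-1)) (is_derive_expR (r t ^+ 2 / (2 * eta))).
have arg_gt0 : 0 < u t i 0 * expR (r t ^+ 2 / (2 * eta)).
  by rewrite mulr_gt0 ?expR_gt0 ?u_gt0 ?ltW.
apply: is_der_val (is_der_comp (is_der_mul (u_velocity i t_gt0) dE) (is_derive1_ln arg_gt0)).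
have v_neq0 : u t i 0 != 0 by rewrite gt_eqF ?u_gt0 ?ltW.
have E_neq0 : expR (r t ^+ 2 / (2 * eta)) != 0 by rewrite gt_eqF ?expR_gt0.
have eta_neq0 : eta != 0 by rewrite gt_eqF.
rewrite gE L2 /= !expr1; field.
by rewrite v_neq0 E_neq0 eta_neq0.
Qed.

(* For L <> 2, with z = 2 - L and E = e^{z r^2/(2 eta)}:
   d/dt (u_i^z E) = z u_i^z E (u_i'/u_i + r r'/eta) = -z E r^L Q_i. *)
Lemma h_entry_deriv t i : 0 < t ->
  is_derive t 1
    (fun s => u s i 0 ^ (2%:Z - L%:Z) * expR ((2%:Z - L%:Z)%:~R * r s ^+ 2 / (2 * eta)))
    (- ((2%:Z - L%:Z)%:~R * expR ((2%:Z - L%:Z)%:~R * r t ^+ 2 / (2 * eta)) * r t ^+ L)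
       * Q t i 0).
Proof.
move=> t_gt0; set z := 2%:Z - L%:Z.
have v_neq0 : u t i 0 != 0 by rewrite gt_eqF ?u_gt0 ?ltW.
have dE := is_der_comp (is_der_mul (is_der_mul (is_der_cst t z%:~R)
  (is_der_pow 2 (r_velocity t_gt0))) (is_der_cst t (2 * eta)^-1))
  (is_derive_expR (z%:~R * r t ^+ 2 / (2 * eta))).
apply: is_der_val (is_der_mul
  (@is_der_exprz _ (fun s => u s i 0) t _ z v_neq0 (u_velocity i t_gt0)) dE).
have -> : z - 1 = 1 - L%:Z by rewrite /z; ring.
have -> : u t i 0 ^ z = u t i 0 ^ (1 - L%:Z) * u t i 0.
  by rewrite -[X in _ * X]expr1z -expfzDr // /z; congr (_ ^ _); ring.
have rL : r t ^+ L = r t ^+ L.-1 * r t by rewrite -exprSr prednK.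
have vL_neq0 : u t i 0 ^+ L.-1 != 0 by rewrite expf_neq0.
have eta_neq0 : eta != 0 by rewrite gt_eqF.
rewrite exprz_1subn // gE exprMn rL /=.
by field; rewrite vL_neq0 eta_neq0.
Qed.

Definition h_coord s : 'cV[R]_N :=
  if L == 2%N then map_mx (fun a => ln (a * expR (r s ^+ 2 / (2 * eta)))) (u s)
  else map_mx (fun a => a ^ (2%:Z - L%:Z) *
                        expR ((2%:Z - L%:Z)%:~R * r s ^+ 2 / (2 * eta))) (u s).

Lemma h_coordE j : (fun s => h_coord s j 0) =
  if L == 2%N then fun s => ln (u s j 0 * expR (r s ^+ 2 / (2 * eta)))
  else fun s => u s j 0 ^ (2%:Z - L%:Z) * expR ((2%:Z - L%:Z)%:~R * r s ^+ 2 / (2 * eta)).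
Proof. by apply/funext => s; rewrite /h_coord; case: ifP; rewrite mxE. Qed.

Lemma h_quantE s : h_quant L A eta (r s) (u s) = (1%:M - Defs.pinv A *m A) *m h_coord s.
Proof. by []. Qed.

Lemma h_coord_deriv t : 0 < t ->
  exists c, forall j, is_derive t 1 (fun s => h_coord s j 0) (c * Q t j 0).
Proof.
move=> t_gt0; case: (eqVneq L 2%N) => [L2|L_neq2]; eexists => j.
  by rewrite h_coordE L2; exact: h_entry_deriv_L2.
by rewrite h_coordE (negPf L_neq2); exact: h_entry_deriv.
Qed.

(* h_coord is continuous on [0, +oo): u stays positive there, so the
   logarithm, resp. the integer power, is continuous along the flow. *)
Lemma h_coord_cont j : {within [set t | 0 <= t], continuous (fun s => h_coord s j 0)}.
Proof.
have [_ [_ [r_cont [u_cont _]]]] := flow.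
have exp_cont (f : R -> R) : {within [set t : R | 0 <= t], continuous f} ->
    {within [set t | 0 <= t], continuous (fun s => expR (f s))}.
  by move=> f_cont; apply: cont_comp f_cont _ => s _; exact: continuous_expR.
rewrite h_coordE; case: (L == 2%N).
  apply: cont_comp => [|s s_ge0].
    apply: cont_mul; first exact: u_cont.
    by apply: exp_cont; apply: cont_mul; [exact: cont_pow | exact: cont_cst].
  by apply: continuous_ln; rewrite mulr_gt0 ?expR_gt0 ?u_gt0.
apply: cont_mul.
  apply: (cont_comp (g := fun a => a ^ (2%:Z - L%:Z)) (u_cont j)) => s s_ge0.
  have v_neq0 : u s j 0 != 0 by rewrite gt_eqF ?u_gt0.
  exact: is_der_continuous (@is_der_exprz _ id _ 1 _ v_neq0 (is_der_id _)).
apply: exp_cont; apply: cont_mul; last exact: cont_cst.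
by apply: cont_mul; [exact: cont_cst | exact: cont_pow].
Qed.

End Flow.

Theorem mainTheorem10 (R : realType) (M N L : nat) (A : 'M[R]_(M, N)) (b : 'cV[R]_M)
  (eta : R) (r0 : R) (u0 : 'cV[R]_N) (r : R -> R) (u : R -> 'cV[R]_N) :
  (0 < L)%N -> 0 < eta -> norm2 u0 = 1 ->
  wn_gradient_flow L A b eta 1 r0 u0 r u ->
  (forall t, 0 <= t -> forall i, 0 < u t i 0) ->
  forall t, 0 <= t -> h_quant L A eta (r t) (u t) = h_quant L A eta (r 0) (u 0).
Proof.
move=> L_gt0 eta_gt0 norm_u0 flow u_gt0 t t_ge0.
set P := 1%:M - Defs.pinv A *m A.
have h_deriv := h_coord_deriv L_gt0 eta_gt0 norm_u0 flow u_gt0.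
have h_cont := h_coord_cont flow u_gt0.
rewrite !h_quantE -/P; apply/matrixP => k j; rewrite ord1 !mxE.
apply: (@constant_of_derive0 _ (fun s => \sum_i P k i * h_coord L eta r u s i 0)) => //.
  by apply: cont_sum => i; apply: cont_mul; [exact: cont_cst | exact: h_cont].
move=> s s_gt0; have [c dh] := h_deriv s s_gt0.
apply: is_der_val (is_der_sum (fun i => is_der_mul (is_der_cst s (P k i)) (dh i))).
(* d/ds (P h)_k = c (P Q)_k = 0 since P annihilates the range of A^T. *)
under eq_bigr do rewrite mulr0 addr0 mulrCA.
have := pinv_proj_backproj L A b (r s *: u s); rewrite -/P => /matrixP /(_ k 0).
by rewrite mxE [RHS]mxE -big_distrr /= => ->; rewrite mulr0.
Qed.
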